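(* Let $U$ and $V$ be finite-dimensional vector spaces over a field $\mathbb{K}$, and $\mathcal{S}$ a linear subspace of $\mathcal{L}(U,V)$ with $\operatorname{codim}_{\mathcal{L}(U,V)}\mathcal{S}\leq 2\dim V-3$. Assume that there is a nonzero $x\in U$ with $\dim\mathcal{S}x\leq 1$, and let $F:\mathcal{S}\to V$ be a range-compatible group homomorphism. Then: (a) if $\mathcal{S}x=\{0\}$, $F$ is local; (b) if $\mathcal{S}x\neq\{0\}$, $F$ is the sum of a local map and of the map $s\mapsto\alpha(s(x))$ for some endomorphism $\alpha$ of the additive group $\mathcal{S}x$; (c) if $F$ is linear, then $F$ is local.
   Context: $\mathcal{S}x:=\{s(x):s\in\mathcal{S}\}$. A map $F:\mathcal{S}\to V$ is range-compatible when $F(s)\in\operatorname{im}s$ for all $s\in\mathcal{S}$, and local when there exists $y\in U$ with $F(s)=s(y)$ for all $s\in\mathcal{S}$. *)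

From HB Require Import structures.
From mathcomp Require Import all_boot all_order all_algebra.
Set Implicit Arguments. Unset Strict Implicit. Unset Printing Implicit Defensive.
Import GRing.Theory.
Local Open Scope ring_scope.

Definition eval_at (K : fieldType) (U V : vectType K) (x : U) : 'Hom('Hom(U, V), V) :=
  linfun (fun f : 'Hom(U, V) => f x).

Definition Sx (K : fieldType) (U V : vectType K) (S : {vspace 'Hom(U, V)}) (x : U)
  : {vspace V} := (eval_at V x @: S)%VS.

(* F : S -> V (represented on all of L(U,V), only values on S matter) *)
Definition additive_on (K : fieldType) (U V : vectType K) (S : {vspace 'Hom(U, V)})
  (F : 'Hom(U, V) -> V) : Prop :=
  forall s t, s \in S -> t \in S -> F (s + t) = F s + F t.

Definition linear_on (K : fieldType) (U V : vectType K) (S : {vspace 'Hom(U, V)})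
  (F : 'Hom(U, V) -> V) : Prop :=
  additive_on S F /\ forall (a : K) s, s \in S -> F (a *: s) = a *: F s.

Definition range_compatible (K : fieldType) (U V : vectType K) (S : {vspace 'Hom(U, V)})
  (F : 'Hom(U, V) -> V) : Prop :=
  forall s, s \in S -> F s \in limg s.

Definition local_map (K : fieldType) (U V : vectType K) (S : {vspace 'Hom(U, V)})
  (F : 'Hom(U, V) -> V) : Prop :=
  exists y : U, forall s, s \in S -> F s = s y.

Definition additive_endo_of (K : fieldType) (V : vectType K) (W : {vspace V})
  (alpha : V -> V) : Prop :=
  (forall v, v \in W -> alpha v \in W) /\
  (forall v w, v \in W -> w \in W -> alpha (v + w) = alpha v + alpha w).

(* Work in L(U/Z, C), the operators vanishing on Z with values in C.  By
   induction on the codimension of Z we prove an avoidance property: an affine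
   family a + D with D of codimension < dim C in L(U/Z, C) contains an operator
   whose range misses any given nonzero z in C ([avoidance_all]).  Applied to
   the operators vanishing at a point w, it forces the values of a range-
   compatible additive map G, zero on those operators, onto the lines through
   the values at w ([values_in_lines]); when these values span a plane, G is a
   scalar multiple of evaluation at w ([scalar_of_lines]).  A second induction
   gives locality for spaces of codimension <= dim C - 2 ([local_of_large]).
   For the theorem, F is local on the operators killing x, say at y; the
   corrected map s |-> F s - s y then only depends on s x, which lies on the
   line S x (or vanishes), giving (a), (b) and, by linearity, (c). *)

From HB Require Import structures.
From mathcomp Require Import all_boot all_order all_algebra.
From mathcomp Require Import zify.
Import GRing.Theory.
Local Open Scope ring_scope.
Set Implicit Arguments.
Unset Strict Implicit.

(* Dimension bookkeeping: terms over 'Hom(U, V) carry [reverse_coercion]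
   marks that hide syntactic equalities from [lia]. *)
Local Ltac dim_lia := cbv [reverse_coercion] in *; lia.

Section RangeCompatible.
Variables (K : fieldType) (U V : vectType K).
Implicit Types (Z : {vspace U}) (C : {vspace V}) (S D : {vspace 'Hom(U, V)})
  (x w : U) (s : 'Hom(U, V)).

Definition apply_at (x : U) (f : 'Hom(U, V)) : V := f x.
Fact apply_at_is_linear x : linear (apply_at x).
Proof. by move=> a f g; rewrite /apply_at add_lfunE scale_lfunE. Qed.
HB.instance Definition _ x :=
  GRing.isLinear.Build K 'Hom(U, V) V _ (apply_at x) (apply_at_is_linear x).

Lemma eval_atE x f : eval_at V x f = f x.
Proof. by rewrite -[f x]/(apply_at x f) -(lfunE (apply_at x)). Qed.

Lemma memv_Sx S x s : s \in S -> s x \in Sx S x.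
Proof. by move=> Hs; rewrite -eval_atE; apply: memv_img. Qed.

Lemma SxP S x v : v \in Sx S x -> exists2 s, s \in S & v = s x.
Proof. by case/memv_imgP => s Hs ->; exists s; rewrite ?eval_atE. Qed.

Lemma mem_limg (f : 'Hom(U, V)) u : f u \in limg f.
Proof. exact/memv_img/memvf. Qed.

Definition vanishing_at S (w : U) : {vspace 'Hom(U, V)} :=
  (S :&: lker (eval_at V w))%VS.

Lemma mem_vanishing_at S w s : (s \in vanishing_at S w) = (s \in S) && (s w == 0).
Proof. by rewrite memv_cap memv_ker eval_atE. Qed.

Lemma vanishing_at_sub S w : (vanishing_at S w <= S)%VS.
Proof. exact: capvSl. Qed.

Lemma dim_vanishing_at S w : (\dim (vanishing_at S w) + \dim (Sx S w))%N = \dim S.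
Proof. exact: limg_ker_dim. Qed.

(* [factors_into Z C s]: s vanishes on Z and takes values in C, i.e. s is an
   operator of L(U/Z, C), a space of dimension [factors_dim Z C]. *)
Definition factors_into Z C (s : 'Hom(U, V)) : Prop :=
  (forall z, z \in Z -> s z = 0) /\ (forall u, s u \in C).

Definition factors_dim Z C : nat := ((\dim {:U} - \dim Z) * \dim C)%N.

Lemma dim_addv_line Z w : w \notin Z -> \dim (Z + <[w]>)%VS = (\dim Z).+1.
Proof.
move=> Zw; have w0 : w != 0 by apply: contraNneq Zw => ->; apply: mem0v.
rewrite dimv_disjoint_sum ?dim_vline ?w0 ?addn1 //; apply/eqP; rewrite -subv0.
apply/subvP => y /memv_capP [Zy /vlineP [k Ey]]; rewrite memv0; subst y.
have [-> | k0] := eqVneq k 0; first by rewrite scale0r.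
by case/negP: Zw; rewrite -[w](scalerK k0) memvZ.
Qed.

Lemma factors_dim_addv_line Z C w :
  w \notin Z -> factors_dim Z C = (factors_dim (Z + <[w]>) C + \dim C)%N.
Proof.
move=> Zw; have := dimvS (subvf (Z + <[w]>)%VS).
rewrite /factors_dim dim_addv_line // => HZ.
by rewrite -mulSnr subnSK.
Qed.

Lemma factors_dim_split Z C C1 C2 :
  \dim C = (\dim C1 + \dim C2)%N ->
  factors_dim Z C = (factors_dim Z C1 + factors_dim Z C2)%N.
Proof. by move=> HC; rewrite /factors_dim HC mulnDr. Qed.

Lemma factors_full C s : factors_into fullv C s -> s = 0.
Proof. by case=> Hs _; apply/lfunP => u; rewrite Hs ?memvf // lfunE. Qed.

Lemma factors_intoD Z C s t :
  factors_into Z C s -> factors_into Z C t -> factors_into Z C (s + t).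
Proof.
case=> sZ sC [tZ tC]; split=> [z Hz|u]; rewrite add_lfunE ?memvD //.
by rewrite sZ // tZ // addr0.
Qed.

Lemma factors_intoB Z C s t :
  factors_into Z C s -> factors_into Z C t -> factors_into Z C (s - t).
Proof.
case=> sZ sC [tZ tC]; split=> [z Hz|u]; rewrite add_lfunE opp_lfunE ?memvB //.
by rewrite sZ // tZ // subrr.
Qed.

Lemma factors_addv_line Z C s w :
  factors_into Z C s -> s w = 0 -> factors_into (Z + <[w]>) C s.
Proof.
case=> sZ sC sw0; split=> // _ /memv_addP [z Hz [_ /vlineP [k ->] ->]].
by rewrite linearD linearZ /= sZ // sw0 scaler0 addr0.
Qed.

Lemma factors_vanishing_at Z C S w :
  (forall s, s \in S -> factors_into Z C s) ->
  forall s, s \in vanishing_at S w -> factors_into (Z + <[w]>) C s.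
Proof.
move=> HS s; rewrite mem_vanishing_at => /andP [/HS Hs /eqP sw0].
exact: factors_addv_line.
Qed.

Lemma Sx_factors Z C S w :
  (forall s, s \in S -> factors_into Z C s) -> (Sx S w <= C)%VS.
Proof. by move=> HS; apply/subvP => _ /SxP [s /HS [_ HC] ->]. Qed.

Lemma factors_line Z (s : 'Hom(U, V)) w :
  (forall z, z \in Z -> s z = 0) ->
  forall y, y \in (Z + <[w]>)%VS -> s y \in <[s w]>%VS.
Proof.
move=> HZ _ /memv_addP [z Hz [_ /vlineP [k ->] ->]].
by rewrite linearD linearZ /= HZ // add0r memvZ ?memv_line.
Qed.

Lemma factors_trivial s : factors_into 0 {:V} s.
Proof. by split=> [z|u]; rewrite ?memvf // memv0 => /eqP ->; rewrite linear0. Qed.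

Lemma factors_dim_trivial : factors_dim 0 {:V} = \dim {:'Hom(U, V)}.
Proof. by rewrite /factors_dim dimv0 subn0 !dimvf. Qed.

Lemma codim_ind (P : {vspace U} -> Prop) :
  P fullv -> (forall Z w, w \notin Z -> P (Z + <[w]>)%VS -> P Z) -> forall Z, P Z.
Proof.
move=> Pfull Pstep Z; have [k] := ubnPeq (\dim {:U} - \dim Z)%N.
elim: k Z => [|k IH] Z Hk.
  suff -> : Z = fullv by [].
  by apply/eqP; rewrite eqEdim subvf; lia.
have [w _ Zw] : exists2 w, w \in fullv & w \notin Z.
  apply/subvPn/negP => /dimvS; lia.
apply: (Pstep _ w Zw); apply: IH.
have := dimvS (subvf (Z + <[w]>)%VS); rewrite dim_addv_line //; lia.
Qed.

Lemma dim_factors Z : forall C S,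
  (forall s, s \in S -> factors_into Z C s) -> (\dim S <= factors_dim Z C)%N.
Proof.
elim/codim_ind: Z => [|Z w Zw IH] C S HS.
  rewrite /factors_dim subnn mul0n leqn0 dimv_eq0 -subv0.
  by apply/subvP => s /HS /factors_full ->; rewrite memv0.
have := IH C _ (factors_vanishing_at (w := w) HS).
have := dimvS (Sx_factors w HS).
rewrite (factors_dim_addv_line C Zw) -(dim_vanishing_at S w); lia.
Qed.

Definition postcomp (P : 'End(V)) (d : 'Hom(U, V)) : 'Hom(U, V) := (P \o d)%VF.
Fact postcomp_is_linear P : linear (postcomp P).
Proof. by move=> a f g; rewrite /postcomp comp_lfunDr comp_lfunZr. Qed.
HB.instance Definition _ P :=
  GRing.isLinear.Build K 'Hom(U, V) 'Hom(U, V) _ (postcomp P) (postcomp_is_linear P).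

Lemma postcompE P d : linfun (postcomp P) d = (P \o d)%VF.
Proof. by rewrite lfunE. Qed.

Section ProjectionModLine.
Variables (C : {vspace V}) (v : V).
Hypothesis Cv : v \in C.
Let P := addv_pi1 C <[v]>.

Lemma proj_line_kills y : y \in <[v]>%VS -> P y = 0.
Proof.
move=> Hy; have := @addv_pi1_pi2 _ _ C <[v]>%VS y (subvP (addvSr _ _) _ Hy).
by rewrite addv_pi2_id // => /(congr1 (fun a => a - y)); rewrite addrK subrr.
Qed.

Lemma proj_line_ker y : y \in C -> P y = 0 -> y \in <[v]>%VS.
Proof.
move=> Hy Py; have := @addv_pi1_pi2 _ _ C <[v]>%VS y (subvP (addvSl _ _) _ Hy).
by rewrite -/P Py add0r => <-; apply: memv_pi2.
Qed.

Lemma dim_proj_line : \dim C = (\dim (C :\: <[v]>) + \dim <[v]>)%N.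
Proof.
have := dimv_cap_compl C <[v]>%VS.
by rewrite (capv_idPr _) -?memvE // addnC => ->.
Qed.

End ProjectionModLine.

Definition avoidance Z : Prop :=
  forall C D (a : 'Hom(U, V)) z,
  (forall d, d \in D -> factors_into Z C d) -> factors_into Z C a ->
  z \in C -> z != 0 -> (factors_dim Z C + 1 <= \dim D + \dim C)%N ->
  exists2 d, d \in D & z \notin limg (a + d).

(* It
   follows by applying [avoidance] after projecting C modulo <[v]>. *)
Lemma avoidance_mod_line Z : avoidance Z ->
  forall C D (t : 'Hom(U, V)) v f,
  (forall d, d \in D -> factors_into Z C d) -> (forall u, t u \in C) ->
  v \in C -> v != 0 -> (forall z, z \in Z -> t z \in <[v]>%VS) ->
  f \in C -> f \notin <[v]>%VS -> (factors_dim Z C + 2 <= \dim D + \dim C)%N ->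
  exists2 d, d \in D & f \notin limg (t + d).
Proof.
move=> avZ C D t v f HD Ct Cv v0 tZ Cf fv Hdim.
pose P := addv_pi1 C <[v]>; pose C' := (C :\: <[v]>)%VS.
pose D' := (linfun (postcomp P) @: D)%VS.
have C'P y : P y \in C' by apply: memv_pi.
have HC := dim_proj_line Cv.
have HD' d' : d' \in D' -> factors_into Z C' d'.
  case/memv_imgP => d Hd ->; have [dZ _] := HD d Hd.
  by split=> [z Hz|u]; rewrite postcompE comp_lfunE // dZ // linear0.
have kerD : (\dim D <= factors_dim Z <[v]> + \dim D')%N.
  rewrite -(limg_ker_dim (linfun (postcomp P)) D) leq_add2r.
  apply: dim_factors => d; rewrite memv_cap memv_ker postcompE => /andP [Hd /eqP Pd].
  have [dZ dC] := HD d Hd; split=> [//|u]; apply: proj_line_ker => //.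
  by rewrite -comp_lfunE Pd lfunE.
have Pt : factors_into Z C' (P \o t)%VF.
  by split=> [z Hz|u]; rewrite comp_lfunE // proj_line_kills ?tZ.
have Pf0 : P f != 0 by apply: contra fv => /eqP; apply: proj_line_ker.
have dimD' : (factors_dim Z C' + 1 <= \dim D' + \dim C')%N.
  move: Hdim kerD; rewrite (factors_dim_split Z HC) HC dim_vline v0 -/C' /=.
  dim_lia.
have [_ /memv_imgP [d Hd ->] Pf] := avZ C' D' _ (P f) HD' Pt (C'P f) Pf0 dimD'.
exists d => //; apply: contra Pf => /memv_imgP [u _ ->].
by rewrite postcompE -comp_lfunDr -comp_lfunE mem_limg.
Qed.

Lemma notin_line_sym (z b : V) : z != 0 -> b \notin <[z]>%VS -> z \notin <[b]>%VS.
Proof.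
move=> z0; apply: contra => /vlineP [c Ec].
have c0 : c != 0 by apply: contraNneq z0 => c0; rewrite Ec c0 scale0r.
by apply/vlineP; exists c^-1; rewrite Ec scalerA mulVf ?scale1r.
Qed.

Lemma shift_off_line (E : {vspace V}) (a z : V) :
  a \notin E -> E != 0%VS -> exists2 e, e \in E & a + e \notin <[z]>%VS.
Proof.
move=> aE E0; have [az | az] := boolP (a \in <[z]>%VS); last first.
  by exists 0; rewrite ?mem0v ?addr0.
have /subvPn [e Ee ez] : ~~ (E <= <[z]>)%VS.
  apply: contra aE => Ez; suff -> : E = <[z]>%VS by [].
  apply/eqP; rewrite eqEdim Ez dim_vline (leq_trans (leq_b1 _)) // lt0n dimv_eq0 //.
exists e => //; apply: contra ez => aez.
by rewrite -(addKr a e) memvD ?memvN.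
Qed.

(* The avoidance property holds for every subspace Z, by induction on its
   codimension: writing D1 for the operators of D vanishing at w \notin Z,
   either a w is the value of some d in D at w (then correct a by d and use
   the hypothesis for Z + <[w]>), or the values at w of a suitable a + d span
   a line off z and [avoidance_mod_line] for Z + <[w]> concludes. *)
Lemma avoidance_all Z : avoidance Z.
Proof.
elim/codim_ind: Z => [|Z w Zw IH] C D a z HD Ha Cz z0 Hdim.
  exists 0; first exact: mem0v.
  rewrite addr0 (factors_full Ha); apply: contra z0 => /memv_imgP [u _ ->].
  by rewrite lfunE.
have HD1 := factors_vanishing_at (w := w) HD.
have D1D : (vanishing_at D w <= D)%VS := vanishing_at_sub D w.
have dimD := dim_vanishing_at D w.
have EC : (Sx D w <= C)%VS := Sx_factors w HD.
have dimE := dimvS EC.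
have dimD1 := dim_factors HD1.
have dimZ := factors_dim_addv_line C Zw.
have [/SxP [d' Dd' ad'] | aE] := boolP (a w \in Sx D w).
  have Ha' : factors_into (Z + <[w]>) C (a - d').
    apply: factors_addv_line; first exact: factors_intoB Ha (HD _ Dd').
    by rewrite add_lfunE opp_lfunE ad' subrr.
  have [d1 D1d1 zd1] := IH C (vanishing_at D w) _ z HD1 Ha' Cz z0 ltac:(dim_lia).
  exists (d1 - d'); first exact/memvB/Dd'/(subvP D1D).
  by rewrite addrCA addrC.
have dimEC : (\dim (Sx D w) < \dim C)%N.
  rewrite ltnNge; apply: contra aE => CE.
  by have [_ /(_ w)] := Ha; rewrite -(eqP (_ : Sx D w == C)) // eqEdim EC.
have [_ /SxP [d' Dd' ->] aez] := shift_off_line z aE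
  ltac:(rewrite -dimv_eq0; dim_lia).
have [tZ tC] : factors_into Z C (a + d') by apply: factors_intoD Ha (HD _ Dd').
have tw : (a + d') w = a w + d' w by rewrite add_lfunE.
have tw0 : (a + d') w != 0.
  by apply: contra aez; rewrite -tw => /eqP ->; apply: mem0v.
have zt : z \notin <[(a + d') w]>%VS by apply: notin_line_sym; rewrite ?tw.
have [d1 D1d1 zd1] := avoidance_mod_line IH HD1 tC (tC w) tw0
  (factors_line tZ) Cz zt ltac:(dim_lia).
by exists (d' + d1); [apply/memvD/(subvP D1D) | rewrite addrA].
Qed.

Implicit Types (F G : 'Hom(U, V) -> V) (y : U).

Lemma additive_on_sub S1 S F : (S1 <= S)%VS -> additive_on S F -> additive_on S1 F.
Proof. by move=> /subvP S1S HF s t /S1S Hs /S1S Ht; apply: HF. Qed.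

Lemma range_compatible_sub S1 S F :
  (S1 <= S)%VS -> range_compatible S F -> range_compatible S1 F.
Proof. by move=> /subvP S1S HF s /S1S; apply: HF. Qed.

Lemma additive_on0 S F : additive_on S F -> F 0 = 0.
Proof.
move=> HF; apply: (@addrI _ (F 0)); rewrite -HF ?mem0v //.
by rewrite !addr0.
Qed.

Definition shift_by F y (s : 'Hom(U, V)) : V := F s - s y.

Lemma additive_shift_by S F y : additive_on S F -> additive_on S (shift_by F y).
Proof. by move=> HF s t Hs Ht; rewrite /shift_by HF // add_lfunE opprD addrACA. Qed.

Lemma range_compatible_shift_by S F y :
  range_compatible S F -> range_compatible S (shift_by F y).
Proof. by move=> HF s Hs; rewrite memvB ?HF ?mem_limg. Qed.

Lemma linear_shift_by S F y : linear_on S F -> linear_on S (shift_by F y).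
Proof.
case=> HF HZ; split=> [|a s Ss]; first exact: additive_shift_by.
by rewrite /shift_by HZ // scale_lfunE scalerBr.
Qed.

Lemma shift_by_vanishes S F y :
  (forall s, s \in S -> F s = s y) -> forall s, s \in S -> shift_by F y s = 0.
Proof. by move=> Fy s /Fy; rewrite /shift_by => ->; rewrite subrr. Qed.

Lemma local_of_shift_scalar S F y w (k : K) :
  (forall s, s \in S -> shift_by F y s = k *: s w) -> local_map S F.
Proof.
move=> Hk; exists (y + k *: w) => s /Hk; rewrite /shift_by => /eqP.
by rewrite subr_eq linearD linearZ addrC => /eqP.
Qed.

(* Otherwise [avoidance_mod_line] yields d vanishing at w with
   G s = G (s + d) outside the range of s + d. *)
Lemma values_in_lines Z C S G w :
  (forall s, s \in S -> factors_into Z C s) ->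
  (factors_dim (Z + <[w]>) C + 2 <= \dim (vanishing_at S w) + \dim C)%N ->
  additive_on S G -> range_compatible S G ->
  (forall s, s \in vanishing_at S w -> G s = 0) ->
  forall s, s \in S -> G s \in <[s w]>%VS.
Proof.
move=> HS Hdim HG RG G0 s Ss.
have [sw0 | sw0] := eqVneq (s w) 0.
  by rewrite G0 ?mem0v // mem_vanishing_at Ss sw0 eqxx.
have [sZ sC] := HS s Ss.
have CGs : G s \in C by case/memv_imgP: (RG s Ss) => u _ ->.
apply/negPn/negP => Gsw.
have [d Dd] := avoidance_mod_line (avoidance_all (Z := (Z + <[w]>)%VS))
  (factors_vanishing_at (w := w) HS) sC (sC w) sw0 (factors_line sZ) CGs Gsw Hdim.
have Sd := subvP (vanishing_at_sub S w) _ Dd.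
by rewrite -[G s]addr0 -(G0 d Dd) -HG // RG ?memvD.
Qed.

Lemma line_coeffs_eq0 (a b : V) (ka kb : K) :
  a != 0 -> b \notin <[a]>%VS -> ka *: a + kb *: b = 0 -> ka = 0 /\ kb = 0.
Proof.
move=> a0 ba Eab; have kb0 : kb = 0.
  apply: contraNeq ba => kb0; apply/vlineP; exists (- (kb^-1 * ka)).
  move/eqP: Eab; rewrite addrC addr_eq0 => /eqP Eb.
  by rewrite -[b](scalerK kb0) Eb scalerN scalerA scaleNr.
move: Eab; rewrite kb0 scale0r addr0 => /eqP; rewrite scaler_eq0 (negPf a0) orbF.
by move/eqP.
Qed.

(* For an additive G whose values lie on the lines through the values at w,
   the coefficients attached to two operators with independent values at w
   coincide (compare them with the coefficient of their sum). *)
Lemma same_line_coeff S G w s t (ks kt : K) :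
  additive_on S G -> (forall s, s \in S -> G s \in <[s w]>%VS) ->
  s \in S -> t \in S -> s w != 0 -> t w \notin <[s w]>%VS ->
  G s = ks *: s w -> G t = kt *: t w -> ks = kt.
Proof.
move=> HG Gline Ss St sw0 tws Gs Gt.
have /vlineP [k Est] := Gline _ (memvD Ss St).
rewrite HG // Gs Gt add_lfunE scalerDr in Est.
have [] := line_coeffs_eq0 (ka := ks - k) (kb := kt - k) sw0 tws.
  by rewrite !scalerBl addrACA Est -opprD subrr.
by move=> /eqP; rewrite subr_eq0 => /eqP -> /eqP; rewrite subr_eq0 => /eqP ->.
Qed.

Lemma Sx_independent S w : (2 <= \dim (Sx S w))%N ->
  exists r t, [/\ r \in S, t \in S, r w != 0 & t w \notin <[r w]>%VS].
Proof.
move=> dimSx; have [r Sr Er] := SxP (memv_pick (Sx S w)).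
have rw0 : r w != 0 by rewrite -Er vpick0 -dimv_eq0; lia.
have /subvPn [_ /SxP [t St ->] tr] : ~~ (Sx S w <= <[r w]>)%VS.
  by apply/negP => /dimvS; rewrite dim_vline rw0; lia.
by exists r, t.
Qed.

Lemma Sx_line S x : (\dim (Sx S x) <= 1)%N -> Sx S x != 0%VS ->
  exists2 s0, s0 \in S & Sx S x = <[s0 x]>%VS.
Proof.
move=> dimSx Sx0; have [s0 Ss0 Es0] := SxP (memv_pick (Sx S x)).
exists s0 => //; apply/esym/eqP; rewrite eqEdim -memvE memv_Sx //= dim_vline.
by rewrite -Es0 vpick0 Sx0.
Qed.

Lemma scalar_of_lines S G w :
  additive_on S G -> (forall s, s \in S -> G s \in <[s w]>%VS) ->
  (2 <= \dim (Sx S w))%N -> exists k, forall s, s \in S -> G s = k *: s w.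
Proof.
move=> HG Gline /Sx_independent [r [t [Sr St rw0 tr]]].
have coeff s : s \in S -> exists k, G s = k *: s w by move=> /Gline /vlineP.
have [kr Gr] := coeff r Sr; have [kt Gt] := coeff t St.
have krt := same_line_coeff HG Gline Sr St rw0 tr Gr Gt.
exists kr => s Ss; have [ks Gs] := coeff s Ss.
have [sw0 | sw0] := eqVneq (s w) 0; first by rewrite Gs sw0 !scaler0.
have [sr | sr] := boolP (s w \in <[r w]>%VS); last first.
  by rewrite Gs (same_line_coeff HG Gline Sr Ss rw0 sr Gr Gs).
have ts : t w \notin <[s w]>%VS.
  by apply: contra tr; rewrite !memvE => ts; apply: subv_trans ts _; rewrite -memvE.
by rewrite Gs (same_line_coeff HG Gline Ss St sw0 ts Gs Gt) -krt.
Qed.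

(* Locality for large spaces of operators of L(U/Z, C), i.e. of codimension at
   most dim C - 2 there, by induction on the codimension of Z: F is local on
   the operators vanishing at w \notin Z, say at y; the corrected map then
   takes values on the lines through the values at w, which span at least a
   plane, so it is a scalar multiple of evaluation at w. *)
Lemma local_of_large Z : forall C S F,
  (forall s, s \in S -> factors_into Z C s) ->
  (factors_dim Z C + 2 <= \dim S + \dim C)%N ->
  additive_on S F -> range_compatible S F -> local_map S F.
Proof.
elim/codim_ind: Z => [|Z w Zw IH] C S F HS Hdim HF RF.
  by exists 0 => s /HS /factors_full ->; rewrite lfunE (additive_on0 HF).
have S1S := vanishing_at_sub S w.
have dimS := dim_vanishing_at S w.
have dimZ := factors_dim_addv_line C Zw.
have dimE := dimvS (Sx_factors w HS).
have dimS1 := dim_factors (factors_vanishing_at (w := w) HS).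
have dimS1' : (factors_dim (Z + <[w]>) C + 2 <= \dim (vanishing_at S w) + \dim C)%N.
  by dim_lia.
have [y Fy] := IH C _ F (factors_vanishing_at (w := w) HS) dimS1'
  (additive_on_sub S1S HF) (range_compatible_sub S1S RF).
have HG := additive_shift_by y HF.
have Gline := values_in_lines HS dimS1' HG (range_compatible_shift_by y RF)
  (shift_by_vanishes Fy).
have [k Gk] := scalar_of_lines HG Gline ltac:(dim_lia).
exact: local_of_shift_scalar Gk.
Qed.

Section LineCase.
Variables (S : {vspace 'Hom(U, V)}) (x : U) (s0 : 'Hom(U, V)) (G : 'Hom(U, V) -> V).
Hypotheses (Ss0 : s0 \in S) (Sx_s0 : Sx S x = <[s0 x]>%VS) (HG : additive_on S G).
Hypothesis G0 : forall s, s \in vanishing_at S x -> G s = 0.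
Hypothesis Gline : forall s, s \in S -> G s \in <[s x]>%VS.

Let lam : V -> K := coord [tuple s0 x] 0.

Lemma coord_s0 v : v \in <[s0 x]>%VS -> v = lam v *: s0 x.
Proof.
move=> Hv; have := @coord_span _ _ 1 [tuple s0 x] v.
by rewrite big_ord1 span_seq1; apply.
Qed.

Lemma G_through_eval s : s \in S -> G s = G (lam (s x) *: s0).
Proof.
move=> Ss; have Ss' : lam (s x) *: s0 \in S by apply: memvZ.
have Hdiff : s - lam (s x) *: s0 \in vanishing_at S x.
  rewrite mem_vanishing_at memvB //= add_lfunE opp_lfunE scale_lfunE.
  by rewrite -coord_s0 ?subrr // -Sx_s0 memv_Sx.
have := HG Ss' (subvP (vanishing_at_sub S x) _ Hdiff).
by rewrite (G0 Hdiff) addr0 addrC subrK.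
Qed.

Lemma endo_of_line :
  exists alpha, additive_endo_of (Sx S x) alpha /\
    forall s, s \in S -> G s = alpha (s x).
Proof.
exists (fun v => G (lam v *: s0)); split; last exact: G_through_eval.
split=> [v _ | v w _ _]; last by rewrite /lam linearD scalerDl HG ?memvZ.
have /vlineP [k ->] := Gline (memvZ (lam v) Ss0).
by rewrite Sx_s0 scale_lfunE memvZ ?memvZ ?memv_line.
Qed.

Lemma scalar_of_linear :
  linear_on S G -> exists k, forall s, s \in S -> G s = k *: s x.
Proof.
case=> _ HZ; have /vlineP [k Gk] := Gline Ss0.
exists k => s Ss; rewrite G_through_eval // HZ // Gk scalerA mulrC -scalerA.
by rewrite -coord_s0 // -Sx_s0 memv_Sx.
Qed.
End LineCase.

Lemma large_vanishing_at S x :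
  ((\dim {:'Hom(U, V)} - \dim S) + 3 <= 2 * \dim {:V})%N ->
  (\dim (Sx S x) <= 1)%N -> x != 0 ->
  (factors_dim (0 + <[x]>) {:V} + 2 <= \dim (vanishing_at S x) + \dim {:V})%N.
Proof.
move=> Hdim dimSx x0; have x_notin0 : x \notin 0%VS by rewrite memv0.
have := factors_dim_addv_line {:V} x_notin0; rewrite factors_dim_trivial.
have := dim_vanishing_at S x; have := dimvS (subvf S); move: Hdim dimSx.
dim_lia.
Qed.

End RangeCompatible.

Theorem proposition2p9 (K : fieldType) (U V : vectType K)
  (S : {vspace 'Hom(U, V)}) (x : U) (F : 'Hom(U, V) -> V) :
  ((\dim (fullv : {vspace 'Hom(U, V)}) - \dim S) + 3 <= 2 * \dim (fullv : {vspace V}))%N ->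
  x != 0 ->
  (\dim (Sx S x) <= 1)%N ->
  additive_on S F ->
  range_compatible S F ->
  [/\ (Sx S x = 0%VS -> local_map S F),
      (Sx S x != 0%VS ->
         exists (y : U) (alpha : V -> V),
           additive_endo_of (Sx S x) alpha /\
           forall s, s \in S -> F s = s y + alpha (s x))
    & (linear_on S F -> local_map S F)].
Proof.
move=> Hdim x0 dimSx HF RF.
have HS s (_ : s \in S) : factors_into 0 {:V} s := factors_trivial s.
have dimS1 := large_vanishing_at Hdim dimSx x0.
have S1S := vanishing_at_sub S x.
have [y Fy] := local_of_large (factors_vanishing_at (w := x) HS) dimS1
  (additive_on_sub S1S HF) (range_compatible_sub S1S RF).
have G0 := shift_by_vanishes Fy.
have HG := additive_shift_by y HF.
have Gline := values_in_lines HS dimS1 HG (range_compatible_shift_by y RF) G0.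
have FG s : F s = s y + shift_by F y s by rewrite /shift_by addrC subrK.
have [Sx0 | Sx0] := eqVneq (Sx S x) 0%VS.
  have Floc : local_map S F.
    exists y => s Ss; rewrite FG G0 ?addr0 // mem_vanishing_at Ss.
    by rewrite -memv0 -Sx0 memv_Sx.
  by split=> // /negP.
have [s0 Ss0 Sx_s0] := Sx_line dimSx Sx0.
split=> [/eqP | _ | /(linear_shift_by y) LG]; first by rewrite (negPf Sx0).
  have [alpha [Halpha Galpha]] := endo_of_line Ss0 Sx_s0 HG G0 Gline.
  by exists y, alpha; split=> // s Ss; rewrite FG Galpha.
have [k Gk] := scalar_of_linear Ss0 Sx_s0 HG G0 Gline LG.
exact: local_of_shift_scalar Gk.
Qed.
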